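(* Let $G$ be a graph on $[n]$ whose connected components are $C_1,\dots,C_k$, and suppose that for all $i\neq j$ no edge of $C_i$ crosses an edge of $C_j$. Then $NC_G\cong NC_{C_1}\times NC_{C_2}\times\cdots\times NC_{C_k}$.
   Context: Graphs are finite simple graphs whose vertices are distinct positive integers; edges are written $ij$ with $i<j$. Two edges $a_1a_2$ and $b_1b_2$ cross if $a_1<b_1<a_2<b_2$ or $b_1<a_1<b_2<a_2$. A spanning subgraph is identified with its edge set. A bond of a graph $X$ is a spanning subgraph of $X$ each of whose connected components is an induced subgraph of $X$. A set partition of the vertex set is crossing if there are distinct blocks $B,B'$ and $a,c\in B$, $b,d\in B'$ with $a<b<c<d$, noncrossing otherwise; a bond is noncrossing if the partition of the vertex set into vertex sets of its connected components is noncrossing. $NC_X$ denotes the poset of noncrossing bonds of $X$ ordered by inclusion of edge sets. *)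

(* Vertices of a graph on [n] = {1,...,n} are represented by
   'I_n (vertex i+1 <-> ordinal i); this shift preserves the order, hence
   crossings and noncrossingness. *)
From mathcomp Require Import all_boot.
Set Implicit Arguments. Unset Strict Implicit. Unset Printing Implicit Defensive.

Section Defs.
Variable n : nat.
Implicit Types (e : rel 'I_n) (V : {set 'I_n}) (B : {set 'I_n * 'I_n}).

Definition simple_graph e := symmetric e /\ irreflexive e.

Definition edges e V : {set 'I_n * 'I_n} :=
  [set p : 'I_n * 'I_n | [&& p.1 < p.2, p.1 \in V, p.2 \in V & e p.1 p.2]].

Definition adj B : rel 'I_n := fun x y => ((x, y) \in B) || ((y, x) \in B).

(* B is a bond of X = (V, edges e V): a spanning subgraph each of whose
   connected components is an induced subgraph of X, i.e. every edge of X
   joining two vertices of the same component of B belongs to B. *)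
Definition is_bond e V B : bool :=
  (B \subset edges e V) &&
  [forall p in edges e V, connect (adj B) p.1 p.2 ==> (p \in B)].

(* The partition of V into vertex sets of components of B is noncrossing:
   no a<b<c<d in V with a,c in one block and b,d in a distinct block. *)
Definition noncrossing_bond V B : bool :=
  ~~ [exists a in V, exists b in V, exists c in V, exists d in V,
        [&& a < b, b < c, c < d, connect (adj B) a c, connect (adj B) b d &
            ~~ connect (adj B) a b]].

(* NC_X as a set of edge sets; its order is inclusion of edge sets. *)
Definition NC e V : {set {set 'I_n * 'I_n}} :=
  [set B : {set 'I_n * 'I_n} | is_bond e V B && noncrossing_bond V B].

Definition components e : {set {set 'I_n}} :=
  [set [set y | connect e x y] | x : 'I_n].

Definition cross (p q : 'I_n * 'I_n) : bool :=
  ((p.1 < q.1) && (q.1 < p.2) && (p.2 < q.2)) ||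
  ((q.1 < p.1) && (p.1 < q.2) && (q.2 < p.2)).

(* Elements of the product poset prod_{C component} NC_C, encoded as finite
   functions from vertex sets to edge sets that are an element of NC_C on
   each component C and empty elsewhere. *)
Definition NCprod e : {set {ffun {set 'I_n} -> {set 'I_n * 'I_n}}} :=
  [set F : {ffun {set 'I_n} -> {set 'I_n * 'I_n}} | [forall C : {set 'I_n}, if C \in components e then F C \in NC e C
                      else F C == set0]].

Definition prod_le e (F F' : {ffun {set 'I_n} -> {set 'I_n * 'I_n}}) : bool :=
  [forall C in components e, F C \subset F' C].

End Defs.

(* The isomorphism restricts a bond to the edges of each component and glues a
   family of bonds back together by taking the union.  Restriction preserves
   noncrossingness since blocks of the restriction are blocks of the bond.
   For the union, a crossing a < b < c < d with a, c in one block and b, d in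
   another is harmless when the two blocks lie in the same component; when they
   lie in different components, some edge p on the path from a to c has exactly
   one endpoint strictly between b and d, so some edge q on the path from b to d
   has exactly one endpoint strictly between the endpoints of p, and p and q
   cross, contradicting the hypothesis. *)
From mathcomp Require Import all_boot.
From mathcomp Require Import zify.
Set Implicit Arguments. Unset Strict Implicit. Unset Printing Implicit Defensive.

Lemma connect_cut_edge (T : finType) (r : rel T) (I : pred T) x y :
  connect r x y -> I x != I y -> exists s t, r s t /\ I s != I t.
Proof.
move=> /connectP[p r_p ->]; elim: p x r_p => [|z p IHp] x /=; first by rewrite eqxx.
case/andP=> rxz r_p; case: (eqVneq (I x) (I z)) => [-> | Ixz]; first exact: IHp.
by move=> _; exists x, z.
Qed.

Lemma straddle_sym (u v b d : nat) :
  b < d -> u < v -> u != b -> u != d -> v != b -> v != d ->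
  (b < u < d) != (b < v < d) -> (u < b < v) != (u < d < v).
Proof. lia. Qed.

Lemma straddle_cross (p1 p2 q1 q2 : nat) :
  p1 < p2 -> q1 < q2 -> p1 != q1 -> p1 != q2 -> p2 != q1 -> p2 != q2 ->
  (p1 < q1 < p2) != (p1 < q2 < p2) ->
  (p1 < q1 < p2) && (p2 < q2) || (q1 < p1 < q2) && (q2 < p2).
Proof. lia. Qed.

Section NoncrossingBonds.

Variables (n : nat) (e : rel 'I_n).
Implicit Types (B P Q : {set 'I_n * 'I_n}) (p q : 'I_n * 'I_n) (V C VA VB : {set 'I_n}).
Implicit Types (x y a b c d : 'I_n) (F : {ffun {set 'I_n} -> {set 'I_n * 'I_n}}).

Definition component x : {set 'I_n} := [set y | connect e x y].

Definition component_parts B : {ffun {set 'I_n} -> {set 'I_n * 'I_n}} :=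
  [ffun C => if C \in components e then B :&: edges e C else set0].

Definition glue F := \bigcup_(C in components e) F C.

Lemma edgesP V p :
  reflect [/\ p.1 < p.2, p.1 \in V, p.2 \in V & e p.1 p.2] (p \in edges e V).
Proof. by rewrite inE; apply: and4P. Qed.

Lemma edgesS V V' : V \subset V' -> edges e V \subset edges e V'.
Proof.
move=> sVV'; apply/subsetP=> p /edgesP[lt_p p1V p2V ep].
by apply/edgesP; rewrite !(subsetP sVV').
Qed.

Lemma edge_in_component p : p \in edges e setT -> p \in edges e (component p.1).
Proof. by case/edgesP=> lt_p _ _ ep; apply/edgesP; rewrite !inE connect0 connect1. Qed.

Lemma mem_components x : component x \in components e.
Proof. exact: imset_f. Qed.

Lemma adj_sym B : symmetric (adj B).
Proof. by move=> x y; rewrite /adj orbC. Qed.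

Lemma connect_adjS B B' x y :
  B \subset B' -> connect (adj B) x y -> connect (adj B') x y.
Proof.
move=> sBB'; apply: connect_sub => u v /orP[] /(subsetP sBB') Buv; apply: connect1.
  by rewrite /adj Buv.
by rewrite /adj Buv orbT.
Qed.

Lemma adj_setI_edges B V x y :
  B \subset edges e setT -> x \in V -> y \in V -> adj B x y ->
  adj (B :&: edges e V) x y.
Proof.
move=> sBE xV yV /orP[] Bxy; have /edgesP[lt_p _ _ exy] := subsetP sBE _ Bxy.
  by rewrite /adj in_setI Bxy; apply/orP; left; apply/edgesP.
by rewrite /adj [X in _ || X]in_setI Bxy; apply/orP; right; apply/edgesP.
Qed.

Lemma adj_separating_edge B (I : pred 'I_n) x y :
  connect (adj B) x y -> I x != I y -> exists2 p, p \in B & I p.1 != I p.2.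
Proof.
move=> cxy Ixy; have [s [t [/orP[Bst | Bts] Ist]]] := connect_cut_edge cxy Ixy.
  by exists (s, t).
by exists (t, s); rewrite // eq_sym.
Qed.

Lemma interleaved_edges_cross VA VB P Q a b c d :
  [disjoint VA & VB] -> P \subset edges e VA -> Q \subset edges e VB ->
  b \in VB -> d \in VB -> a < b -> b < c -> c < d ->
  connect (adj P) a c -> connect (adj Q) b d ->
  exists2 p, p \in P & exists2 q, q \in Q & cross p q.
Proof.
move=> dAB sPA sQB Bb Bd ab bc cd ac bd.
have neqAB x y : x \in VA -> y \in VB -> nat_of_ord x != y.
  by move=> Ax By; apply: contraTneq Ax => /val_inj->; rewrite (disjointFl dAB).
have Iac : (b < a < d) != (b < c < d) by lia.
have [p Pp Ip] := adj_separating_edge (I := fun x => b < x < d) ac Iac.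
have /edgesP[lt_p Ap1 Ap2 _] := subsetP sPA p Pp.
have Jbd : (p.1 < b < p.2) != (p.1 < d < p.2).
  by apply: straddle_sym (ltn_trans bc cd) _ _ _ _ _ _; rewrite ?neqAB.
have [q Qq Jq] := adj_separating_edge (I := fun x => p.1 < x < p.2) bd Jbd.
have /edgesP[lt_q Bq1 Bq2 _] := subsetP sQB q Qq.
by exists p => //; exists q => //; apply: straddle_cross; rewrite ?neqAB.
Qed.

Lemma NCP V B :
  reflect [/\ B \subset edges e V,
              forall p, p \in edges e V -> connect (adj B) p.1 p.2 -> p \in B &
              forall a b c d, a \in V -> b \in V -> c \in V -> d \in V ->
                a < b -> b < c -> c < d ->
                connect (adj B) a c -> connect (adj B) b d -> connect (adj B) a b]
          (B \in NC e V).
Proof.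
rewrite inE /is_bond /noncrossing_bond; apply: (iffP idP).
  case/andP=> /andP[sBE /forall_inP clB] ncB; split=> //.
    by move=> p Ep cp; apply: (implyP (clB p Ep)).
  move=> a b c d Va Vb Vc Vd ab bc cd ac bd; apply: contraNT ncB => nab.
  apply/exists_inP; exists a => //; apply/exists_inP; exists b => //.
  apply/exists_inP; exists c => //; apply/exists_inP; exists d => //.
  by rewrite ab bc cd ac bd.
case=> sBE clB ncB; rewrite sBE /=; apply/andP; split.
  by apply/forall_inP=> p Ep; apply/implyP; apply: clB.
apply/negP=> /exists_inP[a Va /exists_inP[b Vb /exists_inP[c Vc /exists_inP[d Vd]]]].
by case/and5P=> ab bc cd ac /andP[bd]; rewrite (ncB a b c d).
Qed.

Lemma NCprodP F :
  reflect ((forall C, C \in components e -> F C \in NC e C) /\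
           (forall C, C \notin components e -> F C = set0))
          (F \in NCprod e).
Proof.
rewrite inE; apply: (iffP forallP) => [FC | [FC F0] C].
  by split=> C Cc; have := FC C; [rewrite Cc | rewrite (negbTE Cc) => /eqP].
by case: ifP => Cc; [apply: FC | rewrite F0 ?Cc].
Qed.

Hypothesis sym_e : symmetric e.

Lemma component_eq x y : y \in component x -> component y = component x.
Proof.
by rewrite inE => cxy; apply/setP=> z; rewrite !inE (same_connect (sym_connect_sym sym_e) cxy).
Qed.

Lemma component_of_mem C x : C \in components e -> x \in C -> C = component x.
Proof. by case/imsetP=> z _ -> zx; rewrite (component_eq zx). Qed.

Lemma disjoint_components x y : ~~ connect e x y -> [disjoint component x & component y].
Proof.
move=> nxy; rewrite disjoint_subset; apply/subsetP=> z; rewrite !inE => xz.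
apply: contra nxy => yz.
by apply: connect_trans xz _; rewrite (sym_connect_sym sym_e).
Qed.

Lemma connect_adj_edges B x y :
  B \subset edges e setT -> connect (adj B) x y -> connect e x y.
Proof.
move=> sBE; apply: connect_sub => u v /orP[] /(subsetP sBE) /edgesP[_ _ _ euv].
  exact: connect1.
by apply: connect1; rewrite sym_e.
Qed.

Lemma connect_adj_component B x y :
  B \subset edges e setT -> connect (adj B) x y ->
  connect (adj (B :&: edges e (component x))) x y.
Proof.
set B' := B :&: edges e (component x) => sBE.
have B'E : B' \subset edges e setT := subset_trans (subsetIr _ _) (edgesS (subsetT _)).
suff clB' : closed (adj B) (connect (adj B') x).
  by move=> cxy; have := closed_connect clB' cxy; rewrite !inE connect0.
apply: intro_closed; first exact: sym_connect_sym (adj_sym B).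
move=> u v Buv xu.
have ux : u \in component x by rewrite inE (connect_adj_edges B'E xu).
have vx : v \in component x.
  by rewrite -(component_eq ux) inE (connect_adj_edges sBE (connect1 Buv)).
exact: connect_trans xu (connect1 (adj_setI_edges sBE ux vx Buv)).
Qed.

Lemma NC_setI_edges B C :
  B \in NC e setT -> C \in components e -> B :&: edges e C \in NC e C.
Proof.
case/NCP=> sBE clB ncB Cc; apply/NCP; split; first exact: subsetIr.
  move=> p Ep cp; rewrite in_setI Ep andbT.
  apply: clB (connect_adjS (subsetIl _ _) cp).
  exact: subsetP (edgesS (subsetT C)) _ Ep.
move=> a b c d Ca _ _ _ ab bc cd ac bd.
have cab : connect (adj B) a b.
  by apply: ncB ab bc cd (connect_adjS (subsetIl _ _) ac) (connect_adjS (subsetIl _ _) bd);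
    rewrite inE.
by rewrite (component_of_mem Cc Ca); apply: connect_adj_component.
Qed.

Lemma glue_setI_edges F C :
  (forall C, C \in components e -> F C \subset edges e C) ->
  C \in components e -> glue F :&: edges e C = F C.
Proof.
move=> FE Cc; apply/setP=> p; rewrite in_setI; apply/andP/idP => [[]|Fp].
  case/bigcupP=> C' C'c Fp /edgesP[_ Cp1 _ _].
  have /edgesP[_ C'p1 _ _] := subsetP (FE C' C'c) p Fp.
  by rewrite (component_of_mem Cc Cp1) -(component_of_mem C'c C'p1).
by split; [apply/bigcupP; exists C | apply: (subsetP (FE C Cc))].
Qed.

Lemma component_parts_le B B' :
  B \subset edges e setT ->
  (B \subset B') = prod_le e (component_parts B) (component_parts B').
Proof.
move=> sBE; apply/idP/forall_inP => [sBB' C Cc | le].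
  by rewrite !ffunE Cc setSI.
apply/subsetP=> p Bp; have Ep := edge_in_component (subsetP sBE p Bp).
have := le _ (mem_components p.1); rewrite !ffunE mem_components.
by move/subsetP/(_ p); rewrite !in_setI Bp Ep => /(_ isT)/andP[].
Qed.

Lemma component_parts_NCprod B :
  B \in NC e setT -> component_parts B \in NCprod e.
Proof.
move=> BNC; apply/NCprodP; split=> C Cc; rewrite ffunE.
  by rewrite Cc; apply: NC_setI_edges.
by rewrite (negbTE Cc).
Qed.

Lemma component_parts_glue F : F \in NCprod e -> component_parts (glue F) = F.
Proof.
case/NCprodP=> FNC F0; apply/ffunP=> C; rewrite ffunE.
case: (boolP (C \in components e)) => Cc; last by rewrite F0.
by apply: glue_setI_edges => // C' /FNC /NCP[].
Qed.

Hypothesis components_noncrossing :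
  forall C C', C \in components e -> C' \in components e -> C != C' ->
    forall p q, p \in edges e C -> q \in edges e C' -> ~~ cross p q.

Lemma glue_NC F : F \in NCprod e -> glue F \in NC e setT.
Proof.
case/NCprodP=> FNC _; set B := glue F.
have FE C : C \in components e -> F C \subset edges e C by case/FNC/NCP.
have sBE : B \subset edges e setT.
  by apply/bigcupsP=> C Cc; apply: subset_trans (FE C Cc) (edgesS (subsetT _)).
have FB x : F (component x) \subset B := bigcup_sup _ (mem_components x).
have cB x y : connect (adj B) x y -> connect (adj (F (component x))) x y.
  by rewrite -(glue_setI_edges FE (mem_components x)); apply: connect_adj_component.
apply/NCP; split=> // [p Ep cp | a b c d _ _ _ _ ab bc cd ac bd].
  have /NCP[_ clF _] := FNC _ (mem_components p.1).
  exact: subsetP (FB p.1) _ (clF _ (edge_in_component Ep) (cB _ _ cp)).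
have Ac : c \in component a by rewrite inE (connect_adj_edges sBE ac).
have Bd : d \in component b by rewrite inE (connect_adj_edges sBE bd).
have Bb : b \in component b by rewrite inE connect0.
case: (boolP (connect e a b)) => [eab | neab].
  have Aa : a \in component a by rewrite inE connect0.
  have Ab : b \in component a by rewrite inE.
  have bdA : connect (adj (F (component a))) b d by rewrite -(component_eq Ab) cB.
  rewrite (component_eq Ab) in Bd.
  have /NCP[_ _ ncF] := FNC _ (mem_components a).
  exact: connect_adjS (FB a) (ncF a b c d Aa Ab Ac Bd ab bc cd (cB _ _ ac) bdA).
have neqAB : component a != component b.
  by apply: contraNneq neab => AB; move: Bb; rewrite -AB inE.
have [p Pp [q Qq /negP[]]] := interleaved_edges_cross (disjoint_components neab)
  (FE _ (mem_components a)) (FE _ (mem_components b)) Bb Bd ab bc cd (cB _ _ ac) (cB _ _ bd).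
apply/negP; apply: (components_noncrossing (mem_components a) (mem_components b) neqAB).
  exact: subsetP (FE _ (mem_components a)) _ Pp.
exact: subsetP (FE _ (mem_components b)) _ Qq.
Qed.

End NoncrossingBonds.

Theorem lemma2p9 (n : nat) (e : rel 'I_n) :
  simple_graph e ->
  (forall C C', C \in components e -> C' \in components e -> C != C' ->
     forall p q, p \in edges e C -> q \in edges e C' -> ~~ cross p q) ->
  exists phi : {set 'I_n * 'I_n} -> {ffun {set 'I_n} -> {set 'I_n * 'I_n}},
    [/\ {in NC e setT, forall B, phi B \in NCprod e},
        {in NC e setT &, injective phi},
        (forall F, F \in NCprod e -> exists2 B, B \in NC e setT & phi B = F) &
        {in NC e setT &, forall B B' : {set 'I_n * 'I_n}, (B \subset B') = prod_le e (phi B) (phi B')}].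
Proof.
move=> [sym_e _] ncross; exists (component_parts e).
have le : {in NC e setT &, forall B B' : {set 'I_n * 'I_n}, (B \subset B') =
    prod_le e (component_parts e B) (component_parts e B')}.
  by move=> B B' /NCP[sBE _ _] _; apply: component_parts_le.
split=> //.
- by move=> B; apply: component_parts_NCprod.
- move=> B B' BNC B'NC eqBB'; apply/eqP.
  rewrite eqEsubset le // le // eqBB' andbb.
  by apply/forall_inP=> C _.
- move=> F FNC; exists (glue e F); first exact: glue_NC.
  exact: component_parts_glue.
Qed.
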